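(* For each positive integer $n$ there is a multiplicative function $f_n$ from the positive integers to the positive integers, with $f_n(p^{k-1})\le f_n(p^k)$ for all primes $p$ and integers $k\ge1$, such that the set of $f_n$-practical numbers has asymptotic density $1-\varphi(n)/n$.
   Context: $\varphi$ is Euler's totient function. $f$ multiplicative means $f(1)=1$ and $f(ab)=f(a)f(b)$ for coprime $a,b$. $S_f(N)=\sum_{d\mid N} f(d)$. A positive integer $N$ is $f$-practical if every positive integer $m\le S_f(N)$ equals $\sum_{d\in\mathcal{D}}f(d)$ for some set $\mathcal{D}$ of distinct divisors of $N$. *)

From Stdlib Require Import Reals.
From mathcomp Require Import all_boot.
Set Implicit Arguments. Unset Strict Implicit. Unset Printing Implicit Defensive.

Definition multiplicative (f : nat -> nat) : Prop :=
  f 1 = 1 /\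
  forall a b, 0 < a -> 0 < b -> coprime a b -> f (a * b) = f a * f b.

Definition Sf (f : nat -> nat) (N : nat) : nat := \sum_(d <- divisors N) f d.

(* N is f-practical: every 1 <= m <= S_f(N) is a sum of f(d) over a set
   of distinct divisors d of N. Divisors of N (N > 0) lie in 'I_N.+1. *)
Definition f_practical (f : nat -> nat) (N : nat) : bool :=
  [forall m : 'I_(Sf f N).+1, (0 < m) ==>
     [exists D : {set 'I_N.+1},
        (D \subset [set d : 'I_N.+1 | nat_of_ord d %| N]) &&
        (\sum_(d in D) f d == m)]].

Definition count_practical (f : nat -> nat) (x : nat) : nat :=
  count (f_practical f) (iota 1 x).

Definition has_density_practical (f : nat -> nat) (l : R) : Prop :=
  Un_cv (fun x => Rdiv (INR (count_practical f x)) (INR x)) l.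

From Stdlib Require Import Reals Lra.
From mathcomp Require Import all_boot zify.
Set Implicit Arguments. Unset Strict Implicit. Unset Printing Implicit Defensive.

(* Take f_n(m) = 3^w(m), where w(m) counts the primes dividing m but not n, so that
   f_n(p^k) is 1 or 3 according as p | n or not.  If N > 1 is coprime to n, every
   divisor d > 1 of N has f_n(d) >= 3, so 2 is not a sum of distinct f_n(d).  If a
   prime p divides both N and n, then f_n = 1 on the divisors of the p-part N_p, which
   is therefore f_n-practical with S_f(N_p) >= 2.  An f-practical A stays f-practical
   when multiplied by a coprime B with f(b) <= S_f(A) + 1 for all b | B: write
   m <= S_f(A) S_f(B) in mixed radix as a sum of f(b) c_b with digits c_b <= S_f(A),
   and realise each digit by divisors of A.  Since f_n(q^k) <= 3, the other prime
   powers of N are attached one at a time.  So, apart from N = 1, the f_n-practical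
   numbers are the N with gcd(N, n) > 1, a set of period n missing phi(n) residues. *)

Lemma gcdn_mul_coprime a b A B : a %| A -> b %| B -> coprime A B -> gcdn (a * b) A = a.
Proof.
move=> aA bB coAB; rewrite gcdnC Gauss_gcdl; first exact/gcdn_idPr.
exact: coprime_dvdr bB coAB.
Qed.

Lemma perm_divisorsM A B : 0 < A -> 0 < B -> coprime A B ->
  perm_eq (divisors (A * B)) [seq a * b | a <- divisors A, b <- divisors B].
Proof.
move=> A0 B0 coAB; have coBA : coprime B A by rewrite coprime_sym.
apply: uniq_perm; first exact: divisors_uniq.
  apply: allpairs_uniq; try exact: divisors_uniq.
  move=> [a b] [a' b'] /allpairsP[[x y] /= [xA yB [-> ->]]].
  move=> /allpairsP[[x' y'] /= [xA' yB' [-> ->]]] /= e.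
  rewrite -!dvdn_divisors // in xA yB xA' yB'.
  rewrite -(gcdn_mul_coprime xA yB coAB) e (gcdn_mul_coprime xA' yB' coAB).
  by rewrite -(gcdn_mul_coprime yB xA coBA) mulnC e mulnC (gcdn_mul_coprime yB' xA' coBA).
move=> d; rewrite -dvdn_divisors ?muln_gt0 ?A0 //.
apply/idP/allpairsP => [dAB | [[a b] /= [aA bB ->]]]; last first.
  by rewrite -!dvdn_divisors // in aA bB; apply: dvdn_mul.
exists (gcdn d A, gcdn d B) => /=; split; rewrite -?dvdn_divisors ?dvdn_gcdr //.
apply/eqP; rewrite eqn_dvd; apply/andP; split.
  by rewrite muln_gcdl !muln_gcdr !dvdn_gcd dAB dvdn_mull // dvdn_mulr // dvdn_mull.
rewrite Gauss_dvd ?dvdn_gcdl //.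
exact: coprime_dvdl (dvdn_gcdr _ _) (coprime_dvdr (dvdn_gcdr _ _) coAB).
Qed.

Lemma big_divisorsM (F : nat -> nat) A B : 0 < A -> 0 < B -> coprime A B ->
  \sum_(d <- divisors (A * B)) F d = \sum_(a <- divisors A) \sum_(b <- divisors B) F (a * b).
Proof.
move=> A0 B0 coAB; rewrite (perm_big _ (perm_divisorsM A0 B0 coAB)).
by rewrite -(map_allpairs (uncurry muln) pair) big_map big_allpairs.
Qed.

Lemma big_divisors_ord (F : nat -> nat) (P : pred nat) N : 0 < N ->
  \sum_(d < N.+1 | P d && (d %| N)) F d = \sum_(d <- divisors N | P d) F d.
Proof.
move=> N0; rewrite -(big_mkord (fun d => P d && (d %| N))).
rewrite (eq_bigl (fun d => (d %| N) && P d)) => [|d]; last exact: andbC.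
rewrite -big_filter_cond; apply/esym/perm_big/uniq_perm.
- exact: divisors_uniq.
- by rewrite filter_uniq ?iota_uniq.
move=> d; rewrite mem_filter mem_index_iota -dvdn_divisors //.
by case dN: (d %| N); rewrite //= ltnS dvdn_leq.
Qed.

Lemma finite_choice (T : eqType) (U : Type) (u0 : U) (Q : T -> U -> Prop) (r : seq T) :
  (forall x, x \in r -> exists y, Q x y) -> exists g : T -> U, forall x, x \in r -> Q x (g x).
Proof.
elim: r => [|x r IH] h; first by exists (fun _ => u0).
have [y Qxy] := h x (mem_head _ _).
have [g Qg] : exists g : T -> U, forall z, z \in r -> Q z (g z).
  by apply: IH => z zr; apply: h; rewrite inE zr orbT.
exists (fun z => if z == x then y else g z) => z; rewrite inE.
by case: eqP => [-> | _ /Qg].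
Qed.

Lemma bounded_combination (T : eqType) (w : T -> nat) S (r : seq T) :
  uniq r -> (forall x, x \in r -> w x <= S.+1) ->
  forall m, m <= S + S * \sum_(x <- r) w x ->
  exists2 c0, c0 <= S & exists2 c : T -> nat,
    (forall x, c x <= S) & m = c0 + \sum_(x <- r) w x * c x.
Proof.
elim: r => [|x r IH] /=.
  move=> _ _ m; rewrite big_nil muln0 addn0 => mS.
  by exists m => //; exists (fun _ => 0) => //; rewrite big_nil addn0.
move=> /andP[xr ur] wS m; rewrite big_cons.
set R := \sum_(y <- r) w y => mS.
have wx : w x <= S.+1 by apply: wS; rewrite mem_head.
have wS' y : y \in r -> w y <= S.+1 by move=> yr; apply: wS; rewrite inE yr orbT.
pose t := if w x * S <= m then S else m %/ w x.
have [tS tm mtR] : [/\ t <= S, w x * t <= m & m - w x * t <= S + S * R].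
  rewrite /t; case: ifP => [wSm | /negbT]; first by split=> //; lia.
  rewrite -ltnNge => mwS; have wx0 : 0 < w x by case: (w x) mwS.
  have := divn_eq m (w x); have := ltn_mod m (w x); rewrite wx0.
  split; first by rewrite -ltnS ltn_divLR //; lia.
    by rewrite mulnC leq_divM.
  lia.
have [c0 c0S [c cS e]] := IH ur wS' _ mtR.
exists c0 => //; exists (fun y => if y == x then t else c y).
  by move=> y; case: (y == x).
rewrite big_cons eqxx.
rewrite (eq_big_seq (fun y => w y * c y)); first lia.
by move=> y yr; case: eqP => // yx; rewrite -yx yr in xr.
Qed.

Section Representations.
Variable f : nat -> nat.

Definition f_representable N m := exists P : pred nat, \sum_(d <- divisors N | P d) f d = m.

Definition f_complete N := forall m, m <= Sf f N -> f_representable N m.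

Lemma f_practicalP N : 0 < N -> reflect (f_complete N) (f_practical f N).
Proof.
move=> N0; pose divs := [set d : 'I_N.+1 | nat_of_ord d %| N].
have sum_divs (P : pred nat) :
    \sum_(d in [set d in divs | P d]) f d = \sum_(d <- divisors N | P d) f d.
  by rewrite -big_divisors_ord //; apply: eq_bigl => d; rewrite !inE andbC.
apply: (iffP forallP) => [practical [_ | m mS] | complN m].
- by exists pred0; rewrite big_pred0.
- have /implyP/(_ isT)/existsP[D /andP[Ddivs /eqP /= sumD]] :=
    practical (Ordinal (mS : m.+1 < (Sf f N).+1)).
  exists (fun d => inord d \in D); rewrite -sum_divs -sumD.
  apply: eq_bigl => d; rewrite inE inord_val andb_idl //.
  by move/(subsetP Ddivs).
- apply/implyP => _; have [P <-] := complN m (ltnSE (ltn_ord m)).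
  apply/existsP; exists [set d in divs | P d]; rewrite sum_divs eqxx andbT.
  by apply/subsetP => d; rewrite inE => /andP[].
Qed.

Hypothesis f1 : f 1 = 1.

Lemma f_complete1 : f_complete 1.
Proof.
have divisors1 : divisors 1 = [:: 1] by [].
rewrite /f_complete /Sf divisors1 big_seq1 f1 => -[_ | [_ | //]].
  by exists pred0; rewrite big_pred0.
by exists predT; rewrite divisors1 big_seq1 f1.
Qed.

Lemma Sf_gt0 N : 0 < N -> 0 < Sf f N.
Proof.
by move=> N0; rewrite /Sf (bigD1_seq 1) ?divisor1 ?divisors_uniq //= f1.
Qed.

Lemma Sf_gt1 N : 1 < N -> 0 < f N -> 1 < Sf f N.
Proof.
move=> N1 fN0; have N0 := ltnW N1.
rewrite /Sf (bigD1_seq 1) ?divisor1 ?divisors_uniq //= f1 ltnS.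
by rewrite (big_rem N) ?divisors_id //= neq_ltn N1 orbT (leq_trans fN0) ?leq_addr.
Qed.

Lemma not_f_complete N : 1 < N -> (forall d, d %| N -> 1 < d -> 3 <= f d) -> ~ f_complete N.
Proof.
move=> N1 f_ge3 complN; have N0 := ltnW N1.
have f_divisor_ge3 d : d \in divisors N -> d != 1 -> 3 <= f d.
  rewrite -dvdn_divisors // => dN d1; apply: f_ge3 => //.
  by rewrite ltn_neqAle eq_sym d1 (dvdn_gt0 N0).
have S2 : 2 <= Sf f N.
  rewrite /Sf (bigD1_seq N) ?divisors_id ?divisors_uniq //=.
  apply/ltnW/(leq_trans (f_divisor_ge3 N (divisors_id N0) _)); first by rewrite neq_ltn N1 orbT.
  exact: leq_addr.
have [P sumP] := complN 2 S2; move: sumP.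
rewrite big_mkcond (bigD1_seq 1) ?divisor1 ?divisors_uniq //= -big_mkcondr f1.
have [/hasP[d dN /andP[d1 Pd]] | noP] := boolP (has (fun d => (d != 1) && P d) (divisors N)).
  rewrite (big_rem d) //= d1 Pd /=.
  by have := f_divisor_ge3 d dN d1; case: (P 1); lia.
by rewrite big_hasC //; case: (P 1).
Qed.

Hypothesis fM : forall a b, 0 < a -> 0 < b -> coprime a b -> f (a * b) = f a * f b.

Lemma big_divisorsM_pred A B (G : nat -> pred nat) : 0 < A -> 0 < B -> coprime A B ->
  \sum_(d <- divisors (A * B) | G (gcdn d B) (gcdn d A)) f d =
  \sum_(b <- divisors B) f b * \sum_(a <- divisors A | G b a) f a.
Proof.
move=> A0 B0 coAB; rewrite big_mkcond big_divisorsM // exchange_big /=.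
apply: eq_big_seq => b bB; rewrite big_distrr [RHS]big_mkcond /=.
apply: eq_big_seq => a aA; rewrite -!dvdn_divisors // in aA bB.
rewrite (gcdn_mul_coprime aA bB coAB) mulnC.
rewrite (gcdn_mul_coprime bB aA) 1?coprime_sym //.
case: (G b a); rewrite ?muln0 // fM ?(dvdn_gt0 A0 aA) ?(dvdn_gt0 B0 bB) //.
by rewrite coprime_sym (coprime_dvdl aA (coprime_dvdr bB coAB)).
Qed.

Lemma Sf_mul A B : 0 < A -> 0 < B -> coprime A B -> Sf f (A * B) = Sf f A * Sf f B.
Proof.
move=> A0 B0 coAB; have := big_divisorsM_pred (fun _ _ => true) A0 B0 coAB.
by rewrite /Sf -big_distrl /= => ->; rewrite mulnC.
Qed.

Lemma f_completeM A B : 0 < A -> 0 < B -> coprime A B -> f_complete A ->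
  (forall b, b %| B -> f b <= (Sf f A).+1) -> f_complete (A * B).
Proof.
move=> A0 B0 coAB complA fB m; rewrite Sf_mul // => mS.
set S := Sf f A in fB mS.
pose r := [seq b <- divisors B | b != 1].
have sum_split F : \sum_(b <- divisors B) F b = F 1 + \sum_(b <- r) F b.
  by rewrite big_filter (bigD1_seq 1) ?divisor1 ?divisors_uniq.
have r_uniq : uniq r by rewrite filter_uniq ?divisors_uniq.
have f_r b : b \in r -> f b <= S.+1.
  by rewrite mem_filter -dvdn_divisors // => /andP[_ /fB].
have mS' : m <= S + S * \sum_(b <- r) f b.
  by rewrite /Sf sum_split f1 mulnDr muln1 in mS.
have [c0 c0S [c cS ->]] := bounded_combination r_uniq f_r mS'.
pose c' b := if b == 1 then c0 else c b.
have c'S b : c' b <= S by rewrite /c'; case: (b == 1).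
have [G sumG] := @finite_choice _ (pred nat) pred0
  (fun b P => \sum_(a <- divisors A | P a) f a = c' b) (divisors B)
  (fun b _ => complA _ (c'S b)).
exists (fun d => G (gcdn d B) (gcdn d A)).
rewrite big_divisorsM_pred // sum_split sumG ?divisor1 // f1 mul1n; congr (_ + _).
apply: eq_big_seq => b; rewrite mem_filter => /andP[b1 bB].
by rewrite sumG // /c' (negbTE b1).
Qed.

Lemma f_completeM_prime_powers A B : 0 < A -> 0 < B -> coprime A B -> f_complete A ->
  (forall q k, prime q -> f (q ^ k) <= (Sf f A).+1) -> f_complete (A * B).
Proof.
move=> A0 + + complA fq; elim/ltn_ind: B => B IH B0 coAB.
have [B1 | B1] := leqP B 1.
  by rewrite (_ : B = 1) ?muln1 //; apply/eqP; rewrite eqn_leq B1 B0.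
pose q := pdiv B; have q_pr : prime q := pdiv_prime B1.
have Bq1 : 1 < B`_q by rewrite p_part_gt1 mem_primes q_pr B0 pdiv_dvd.
have B'0 : 0 < B`_q^' := part_gt0 _ _.
have AB'0 : 0 < A * B`_q^' by rewrite muln_gt0 A0.
have B'B : B`_q^' < B.
  by rewrite -{2}(partnC q B0) mulnC -[X in X < _]muln1 ltn_pmul2l.
have complAB' : f_complete (A * B`_q^').
  by apply: IH; rewrite // (coprime_dvdr (dvdn_part _ _) coAB).
rewrite -(partnC q B0) [B`_q * _]mulnC mulnA; apply: f_completeM => //.
- by rewrite coprimeMl (coprime_dvdr (dvdn_part _ _) coAB) coprime_sym coprime_partC.
- move=> b; rewrite p_part => /(dvdn_pfactor _ _ q_pr)[k _ ->].
  rewrite Sf_mul // ?(coprime_dvdr (dvdn_part _ _) coAB) //.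
  by rewrite (leq_trans (fq q k q_pr)) // ltnS leq_pmulr // Sf_gt0.
Qed.
End Representations.

Section PaperFunction.
Variable n : nat.

Definition fn m := 3 ^ count [pred p | ~~ (p %| n)] (primes m).

Lemma fn_gt0 m : 0 < fn m.
Proof. by rewrite expn_gt0. Qed.

Lemma fn1 : fn 1 = 1.
Proof. by []. Qed.

Lemma fnM a b : 0 < a -> 0 < b -> coprime a b -> fn (a * b) = fn a * fn b.
Proof.
move=> a0 b0 coab; rewrite /fn -expnD -count_cat; congr (3 ^ _); apply/permP.
apply: uniq_perm => [||p]; first exact: primes_uniq.
  by rewrite cat_uniq !primes_uniq -coprime_has_primes // coab.
by rewrite mem_cat primesM.
Qed.

Lemma fn_prime_pow p k : prime p -> 0 < k -> fn (p ^ k) = if p %| n then 1 else 3.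
Proof. by move=> p_pr k0; rewrite /fn primesX // primes_prime //= addn0; case: (p %| n). Qed.

Lemma fn_prime_pow_le3 p k : prime p -> fn (p ^ k) <= 3.
Proof. by move=> p_pr; case: k => [|k]; rewrite ?fn1 // fn_prime_pow //; case: (p %| n). Qed.

Lemma fn_prime_pow_pred_le p k : prime p -> 0 < k -> fn (p ^ k.-1) <= fn (p ^ k).
Proof.
move=> p_pr; case: k => [//|[_ | k _]]; first by rewrite fn1 fn_gt0.
by rewrite !fn_prime_pow.
Qed.

Lemma fn_coprime_ge3 d : 1 < d -> coprime n d -> 3 <= fn d.
Proof.
move=> d1 co_nd; rewrite /fn -[3]expn1 leq_pexp2l // -has_count.
apply/hasP; exists (pdiv d); first by rewrite mem_primes pdiv_prime // pdiv_dvd ltnW.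
rewrite /= -(prime_coprime _ (pdiv_prime d1)) coprime_sym.
exact: coprime_dvdr (pdiv_dvd d) co_nd.
Qed.

Lemma fn_complete N : 0 < N -> ~~ coprime n N -> f_complete fn N.
Proof.
move=> N0 nco; pose p := pdiv (gcdn n N).
have g1 : 1 < gcdn n N by rewrite ltn_neqAle eq_sym nco gcdn_gt0 N0 orbT.
have p_pr : prime p := pdiv_prime g1.
have pN : p %| N := dvdn_trans (pdiv_dvd _) (dvdn_gcdr n N).
have pn : p %| n := dvdn_trans (pdiv_dvd _) (dvdn_gcdl n N).
have Np1 : 1 < N`_p by rewrite p_part_gt1 mem_primes p_pr N0 pN.
have complNp : f_complete fn N`_p.
  rewrite -[N`_p]mul1n; apply: f_completeM; rewrite ?part_gt0 ?coprime1n //.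
  - exact: fnM.
  - exact: f_complete1.
  - by move=> b; rewrite p_part => /(dvdn_pfactor _ _ p_pr)[[|k] _ ->];
      rewrite ?fn1 // fn_prime_pow // pn.
rewrite -(partnC p N0); apply: f_completeM_prime_powers; rewrite ?part_gt0 ?coprime_partC //.
- exact: fnM.
move=> q k q_pr; rewrite (leq_trans (fn_prime_pow_le3 k q_pr)) // ltnS.
by rewrite Sf_gt1 ?fn_gt0.
Qed.

Lemma fn_practical N : 0 < N -> f_practical fn N = (N == 1) || ~~ coprime n N.
Proof.
move=> N0; case: (N =P 1) => [-> | /eqP N_neq1] /=.
  by apply/f_practicalP/f_complete1.
have N1 : 1 < N by rewrite ltn_neqAle eq_sym N_neq1.
case co_nN: (coprime n N) => /=; last by apply/f_practicalP/fn_complete; rewrite ?co_nN.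
apply/(f_practicalP _ N0)/not_f_complete => // d dN d1.
exact: fn_coprime_ge3 d1 (coprime_dvdr dN co_nN).
Qed.
End PaperFunction.

Section PeriodicCount.
Variables (P : pred nat) (n : nat).
Hypothesis n0 : 0 < n.
Hypothesis P_periodic : forall x, P (x + n) = P x.

Lemma count_iota_periodic x :
  count P (iota 1 (n + x)) = count P (iota 1 n) + count P (iota 1 x).
Proof.
rewrite iotaD count_cat [1 + n]addnC iotaDl count_map; congr (_ + _).
by apply: eq_count => i /=; rewrite addnC P_periodic.
Qed.

Lemma count_iota_periodic_error x :
  count P (iota 1 x) * n <= x * count P (iota 1 n) + n * n /\
  x * count P (iota 1 n) <= count P (iota 1 x) * n + n * n.
Proof.
have count_le y : count P (iota 1 y) <= y.
  by rewrite (leq_trans (count_size _ _)) ?size_iota.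
elim/ltn_ind: x => x IH; have [xn | nx] := ltnP x n.
  by have := count_le x; have := count_le n; split; nia.
have /IH[IH1 IH2] : x - n < x by lia.
by rewrite -(subnKC nx) count_iota_periodic; split; nia.
Qed.
End PeriodicCount.

Lemma totient_count_iota n : totient n = count (coprime n) (iota 1 n).
Proof.
have -> : totient n = count (coprime n) (iota 0 n).
  rewrite totient_count_coprime -sum1_count [RHS]big_mkcond /index_iota subn0.
  by apply: eq_bigr => d _; case: coprime.
case: n => [//|n]; have -> : iota 1 n.+1 = iota 1 n ++ [:: n.+1].
  by rewrite -(addn1 n) iotaD add1n addn1.
by rewrite /= count_cat /= /coprime gcdn0 gcdnn addn0 addnC.
Qed.

Lemma count_practical_fn n x : 0 < x ->
  count_practical (fn n) x + count (coprime n) (iota 1 x) = x + 1.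
Proof.
case: x => [//|x] _; rewrite /count_practical /= fn_practical // coprimen1 /=.
rewrite (@eq_in_count _ _ (predC (coprime n))) => [|N]; last first.
  by rewrite mem_iota => /andP[N2 _]; rewrite fn_practical ?(ltnW N2) // gtn_eqF.
have := count_predC (coprime n) (iota 2 x); rewrite size_iota.
by set a := count (coprime n) _; set b := count (predC _) _; lia.
Qed.

Section DensityLimit.
Local Open Scope R_scope.

Lemma Un_cv_div_INR (a : nat -> R) (l C : R) :
  (forall x, (0 < x)%N -> Rabs (a x - l * INR x) <= C) ->
  Un_cv (fun x => a x / INR x) l.
Proof.
move=> bound eps eps0; have C0 : 0 <= C := Rle_trans _ _ _ (Rabs_pos _) (bound 1%N isT).
have [N NC] := INR_unbounded (C / eps).
exists N.+1 => x xN; rewrite /R_dist.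
have x0 : 0 < INR x by apply/lt_0_INR/ltP; lia.
have xC : C < eps * INR x.
  have NX : INR N <= INR x by apply/le_INR/leP; lia.
  have -> : C = C / eps * eps by field; lra.
  by rewrite Rmult_comm; apply: Rmult_lt_compat_l; lra.
have -> : a x / INR x - l = (a x - l * INR x) * / INR x by field; lra.
rewrite Rabs_mult Rabs_inv (Rabs_pos_eq (INR x)); last lra.
apply: (Rmult_lt_reg_r (INR x)) => //; rewrite Rmult_assoc Rinv_l; last lra.
by rewrite Rmult_1_r; apply: Rle_lt_trans (bound x _) xC; lia.
Qed.

Lemma count_coprime_iota_error n x : (0 < n)%N ->
  Rabs (INR (count (coprime n) (iota 1 x)) - INR (totient n) / INR n * INR x) <= INR n.
Proof.
move=> n0; have n0R : 0 < INR n by apply/lt_0_INR/ltP.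
have coprime_periodic y : coprime n (y + n) = coprime n y.
  by rewrite /coprime addnC gcdnDl.
have [lo hi] := count_iota_periodic_error n0 coprime_periodic x.
rewrite -totient_count_iota in lo hi.
move/leP/le_INR: lo; move/leP/le_INR: hi; rewrite !plus_INR !mult_INR.
set c := INR (count _ _); set t := INR (totient n) => hi lo.
set q := t / INR n; have tq : t = q * INR n by rewrite /q; field; lra.
rewrite tq in hi lo; apply: Rabs_le; split; nra.
Qed.

Lemma count_practical_fn_error n x : (0 < n)%N -> (0 < x)%N ->
  Rabs (INR (count_practical (fn n) x) - (1 - INR (totient n) / INR n) * INR x)
    <= INR n + 1.
Proof.
move=> n0 x0; have := count_coprime_iota_error x n0.
move: (count_practical_fn n x0) => /(f_equal INR); rewrite !plus_INR /=.
set c := INR (count _ _); set q := INR (totient n) / INR n => e err.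
have -> : INR (count_practical (fn n) x) - (1 - q) * INR x = 1 + - (c - q * INR x) by lra.
by apply: Rle_trans (Rabs_triang _ _) _; rewrite Rabs_R1 Rabs_Ropp; lra.
Qed.
End DensityLimit.

Theorem lemma4p3 : forall n : nat, 0 < n ->
  exists f : nat -> nat,
    multiplicative f /\
    (forall m, 0 < m -> 0 < f m) /\
    (forall p k, prime p -> 0 < k -> f (p ^ k.-1) <= f (p ^ k)) /\
    has_density_practical f (Rminus R1 (Rdiv (INR (totient n)) (INR n))).
Proof.
move=> n n0; exists (fn n); split; first by split; [exact: fn1 | exact: fnM].
split; first by move=> m _; exact: fn_gt0.
split; first by move=> p k; exact: fn_prime_pow_pred_le.
by apply: Un_cv_div_INR => x; exact: count_practical_fn_error.
Qed.
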